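(* Let $G$ be an equilateral compact tree with $p\ge2$ vertices, edge length $\ell$, identically zero potentials, and let $b_1,\dots,b_p\in\mathbb{R}$. Then for each $r=1,2,\dots,p$, the entire function $z\mapsto z^{r-1}\phi(z^2,b_1,\dots,b_p)$ is not of sine type.
   Context: Setting: $G$ is a tree with vertices $v_1,\dots,v_p$ and edges $e_1,\dots,e_{p-1}$ of length $\ell>0$, each oriented arbitrarily and identified with $[0,\ell]$; on each edge $-y_j''=\lambda y_j$. For a vertex $v$ and incident edge $e_j$, $y_j(v)$ is $y_j(\ell)$ if $e_j$ is incoming, $y_j(0)$ if outgoing. Robin–Kirchhoff condition at $v_i$: continuity of $y_j(v_i)$ over incident edges and $\sum_{\text{in}}y_j'(\ell)-\sum_{\text{out}}y_k'(0)+b_iy(v_i)=0$. Characteristic function: with $s(\lambda,x)=\sin(\sqrt\lambda x)/\sqrt\lambda$, $c(\lambda,x)=\cos(\sqrt\lambda x)$ and $y_j=\alpha_js+\beta_jc$ on $e_j$, the vertex conditions form a $2g\times2g$ linear system; fixing for each $v_i$ an incident edge $e_{j(i)}$ and a fixed ordering in which $v_i$ contributes $d(v_i)-1$ continuity rows plus one principal row $\sum_{\text{in}}y_j'(\ell)-\sum_{\text{out}}y_k'(0)+b_iy_{j(i)}(v_i)=0$, $\phi(\lambda,b_1,\dots,b_p)$ is the determinant of its matrix. It is an entire even function of $z=\sqrt\lambda$. Sine type: an entire function $\omega$ of exponential type $\sigma>0$ is of sine type if its zeros lie in a strip $|\operatorname{Im}z|<h$, for some $h_1$ and $M_1,M_2>0$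 one has $M_1\le|\omega(x+ih_1)|\le M_2$ for all real $x$, and its exponential types in the upper and lower half-planes are equal. *)

From HB Require Import structures.
From mathcomp Require Import all_boot all_order all_algebra.
From mathcomp Require Import complex.
From mathcomp Require Import reals.
From mathcomp.analysis Require Import sequences exp trigo.

Set Implicit Arguments.
Unset Strict Implicit.
Unset Printing Implicit Defensive.

Import Order.TTheory GRing.Theory Num.Theory.
Local Open Scope ring_scope.
Import Normc.

Section Defs.
Variable R : realType.
Local Notation C := R[i].

Definition re_part (z : C) : R := let: Complex a _ := z in a.
Definition im_part (z : C) : R := let: Complex _ b := z in b.
Definition cexp (z : C) : C :=
  Complex (expR (re_part z) * cos (im_part z)) (expR (re_part z) * sin (im_part z)).
Definition ci : C := Complex 0 1.
Definition csin (z : C) : C := (cexp (ci * z) - cexp (- (ci * z))) / (2%:R * ci).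
Definition ccos (z : C) : C := (cexp (ci * z) + cexp (- (ci * z))) / 2%:R.

(* s(lambda,x) = sin(sqrt lambda x)/sqrt lambda  (= x when lambda = 0),
   c(lambda,x) = cos(sqrt lambda x); independent of the branch of the root. *)
Definition s_fun (lam : C) (x : R) : C :=
  if lam == 0 then x%:C%C else csin (sqrtC lam * x%:C%C) / sqrtC lam.
Definition c_fun (lam : C) (x : R) : C := ccos (sqrtC lam * x%:C%C).
Definition s'_fun (lam : C) (x : R) : C := ccos (sqrtC lam * x%:C%C).
Definition c'_fun (lam : C) (x : R) : C :=
  - (sqrtC lam * csin (sqrtC lam * x%:C%C)).

Definition entire (f : C -> C) : Prop :=
  forall z0 : C, exists d : C, forall eps : R, 0 < eps ->
    exists2 delta : R, 0 < delta &
      forall z : C, z != z0 -> normc (z - z0) < delta ->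
        normc ((f z - f z0) / (z - z0) - d) < eps.

(* f has exponential type exactly sigma on the set S, i.e.
   limsup_{|z|->oo, z in S} log|f z| / |z| = sigma (written without logs). *)
Definition exp_type_on (S : C -> Prop) (f : C -> C) (sigma : R) : Prop :=
  (forall eps : R, 0 < eps -> exists M : R, forall z, S z ->
       normc (f z) <= M * expR ((sigma + eps) * normc z)) /\
  (forall eps : R, 0 < eps -> ~ (exists M : R, forall z, S z ->
       normc (f z) <= M * expR ((sigma - eps) * normc z))).

Definition sine_type (f : C -> C) : Prop :=
  entire f /\
  (exists sigma : R, 0 < sigma /\ exp_type_on (fun _ => True) f sigma) /\
  (exists h : R, forall z : C, f z = 0 -> `|im_part z| < h) /\
  (exists h1 M1 M2 : R, 0 < M1 /\ 0 < M2 /\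
     forall x : R, M1 <= normc (f (Complex x h1)) <= M2) /\
  (exists tau : R, exp_type_on (fun z => 0 <= im_part z) f tau /\
                   exp_type_on (fun z => im_part z <= 0) f tau).

(* Vertices 'I_p, edges 'I_p.-1; edge k goes from src k (identified with 0)
   to dst k (identified with ell). *)
Definition adj (p : nat) (src dst : 'I_p.-1 -> 'I_p) : rel 'I_p :=
  fun u v => [exists k, ((src k == u) && (dst k == v)) ||
                        ((src k == v) && (dst k == u))].

Definition is_tree (p : nat) (src dst : 'I_p.-1 -> 'I_p) : Prop :=
  (forall k, src k != dst k) /\ (forall u v, connect (adj src dst) u v).

Section Matrix.
Variables (p : nat) (ell : R) (src dst : 'I_p.-1 -> 'I_p)
          (jsel : 'I_p -> 'I_p.-1) (b : 'I_p -> R).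
Local Notation g := p.-1.

(* Columns: lshift k = alpha_k, rshift k = beta_k, y_k = alpha_k s + beta_k c. *)
(* Coefficient of column c in the linear form y_k(v_i). *)
Definition coef_val (lam : C) (i : 'I_p) (k : 'I_g) (c : 'I_(g + g)) : C :=
  match split c with
  | inl k' => if k' == k then
                (if src k == i then 0 else if dst k == i then s_fun lam ell else 0)
              else 0
  | inr k' => if k' == k then
                (if src k == i then 1 else if dst k == i then c_fun lam ell else 0)
              else 0
  end.

(* Coefficient of column c in the principal row of v_i:
   sum_{in} y_k'(ell) - sum_{out} y_k'(0) + b_i y_{j(i)}(v_i). *)
Definition coef_princ (lam : C) (i : 'I_p) (c : 'I_(g + g)) : C :=
  (match split c with
   | inl k' => (if dst k' == i then s'_fun lam ell else 0)
               - (if src k' == i then s'_fun lam 0 else 0)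
   | inr k' => (if dst k' == i then c'_fun lam ell else 0)
               - (if src k' == i then c'_fun lam 0 else 0)
   end) + (b i)%:C%C * coef_val lam i (jsel i) c.

(* Rows are indexed by incidences: lshift k = edge k at src k,
   rshift k = edge k at dst k.  The incidence (j(i), v_i) carries the principal
   row of v_i; every other incidence (k, v_i) carries the continuity row
   y_{j(i)}(v_i) - y_k(v_i) = 0. *)
Definition charmat (lam : C) : 'M[C]_(g + g) :=
  \matrix_(r, c)
    let: (k, i) := match split r with
                   | inl k => (k, src k)
                   | inr k => (k, dst k)
                   end in
    if k == jsel i then coef_princ lam i c
    else coef_val lam i (jsel i) c - coef_val lam i k c.

Definition phi (lam : C) : C := \det (charmat lam).
End Matrix.
End Defs.

From HB Require Import structures.
From mathcomp Require Import all_boot all_order all_algebra.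
From mathcomp Require Import complex.
From mathcomp Require Import reals.
From mathcomp.analysis Require Import sequences exp trigo.
From mathcomp Require Import ring lra.

(* Only the bound |f(x + i h1)| <= M2 of the sine-type definition is refuted.
   Dividing each principal row by z and multiplying each alpha-column by z turns
   the characteristic matrix at lambda = z^2 into K + z^-1 B, where
   K = K(cos z ell, sin z ell) is the Kirchhoff matrix of the tree with zero
   Robin coefficients.  There are at least p principal rows but only p - 1
   alpha-columns, so |phi(z^2)| >= |z| |det (K + z^-1 B)| for |z| >= 1.  Along
   the points z = x + i h1 with x ell = u (mod 2 pi) the matrices K and B do not
   change, so det (K + z^-1 B) tends to det K, and phi(z^2) grows linearly as
   soon as the phase u is chosen with det K <> 0.  In the variable
   q = exp (i z ell), q^(2p-2) det K is a polynomial; it is not identically zero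
   since at q = 1/2, where cos = 5/4 > 1, an energy identity forces every
   solution of the Kirchhoff system to vanish.  Hence all but finitely many
   points of the circle |q| = exp (- h1 ell) give a suitable phase. *)

Set Implicit Arguments.
Unset Strict Implicit.
Unset Printing Implicit Defensive.

Import Order.TTheory GRing.Theory Num.Theory.
Import Normc.
Local Open Scope ring_scope.

Section KirchhoffMatrix.
Variables (p : nat) (src dst : 'I_p.-1 -> 'I_p) (jsel : 'I_p -> 'I_p.-1).
Local Notation g := p.-1.

Definition incidence (r : 'I_(g + g)) : 'I_g * 'I_p :=
  match split r with inl k => (k, src k) | inr k => (k, dst k) end.

Definition principal_row (i : 'I_p) : 'I_(g + g) :=
  if src (jsel i) == i then lshift g (jsel i) else rshift g (jsel i).

(* The rescaled characteristic matrix with zero Robin coefficients: [c] and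
   [s] stand for cos (z ell) and sin (z ell), and [o] for the entries that are
   constant (the value [c(lambda, 0) = 1] and the flux [s'(lambda, 0) = 1]). *)
Definition value_coef (T : nzRingType) (c s o : T) i k (col : 'I_(g + g)) : T :=
  match split col with
  | inl k' => if k' == k then
                (if src k == i then 0 else if dst k == i then s else 0) else 0
  | inr k' => if k' == k then
                (if src k == i then o else if dst k == i then c else 0) else 0
  end.

Definition flux_coef (T : nzRingType) (c s o : T) i (col : 'I_(g + g)) : T :=
  match split col with
  | inl k' => (if dst k' == i then c else 0) - (if src k' == i then o else 0)
  | inr k' => if dst k' == i then - s else 0
  end.

Definition kirchhoff_mx (T : nzRingType) (c s o : T) : 'M[T]_(g + g) :=
  \matrix_(r, col) let: (k, i) := incidence r in
    if k == jsel i then flux_coef c s o i col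
    else value_coef c s o i (jsel i) col - value_coef c s o i k col.

Lemma kirchhoff_mxZ (T : comNzRingType) (q c s o : T) :
  kirchhoff_mx (q * c) (q * s) (q * o) = q *: kirchhoff_mx c s o.
Proof.
apply/matrixP => r col; rewrite !mxE; case: (incidence r) => k i.
rewrite /flux_coef /value_coef; case: (split col) => k';
  repeat case: ifP => _; rewrite ?mulr0 ?subr0 ?sub0r ?mulrN ?mulrBr ?mulr0 //.
Qed.

Lemma map_kirchhoff_mx (T U : comNzRingType) (f : {rmorphism T -> U}) (c s o : T) :
  map_mx f (kirchhoff_mx c s o) = kirchhoff_mx (f c) (f s) (f o).
Proof.
apply/matrixP => r col; rewrite !mxE; case: (incidence r) => k i.
rewrite /flux_coef /value_coef; case: (split col) => k';
  repeat case: ifP => _; rewrite ?rmorphB ?rmorphN ?raddf0 //.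
Qed.

Hypothesis jsel_incident : forall i, src (jsel i) = i \/ dst (jsel i) = i.

Lemma incidence_principal_row i : incidence (principal_row i) = (jsel i, i).
Proof.
rewrite /principal_row /incidence; case: ifP => [/eqP srci | srcNi].
  by rewrite (unsplitK (inl _)) srci.
rewrite (unsplitK (inr _)); case: (jsel_incident i) => [srci | -> //].
by rewrite srci eqxx in srcNi.
Qed.

Lemma principal_row_inj : injective principal_row.
Proof.
by move=> i j /(congr1 (fun r => (incidence r).2)); rewrite !incidence_principal_row.
Qed.
End KirchhoffMatrix.

Section ComplexTrig.
Variable R : realType.
Local Notation C := R[i].

Lemma cexpMN (w : C) : cexp w * cexp (- w) = 1.
Proof.
case: w => x y; rewrite /cexp /= cosN sinN; congr Complex; last by ring.
transitivity (expR x * expR (- x) * (cos y ^+ 2 + sin y ^+ 2)); first by ring.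
by rewrite expRxMexpNx_1 cos2Dsin2 mulr1.
Qed.

Lemma cexp_neq0 (w : C) : cexp w != 0.
Proof. by apply: contra_eqN (cexpMN w) => /eqP ->; rewrite mul0r eq_sym oner_eq0. Qed.

Lemma cexpN (w : C) : cexp (- w) = (cexp w)^-1.
Proof. by apply: (mulfI (cexp_neq0 w)); rewrite cexpMN divff ?cexp_neq0. Qed.

Lemma cexp0 : cexp (0 : C) = 1.
Proof. by rewrite /cexp /= expR0 cos0 sin0 mul1r mulr0. Qed.

Lemma ci_neq0 : ci R != 0.
Proof.
apply: contra_eqN (sqr_i R) => /eqP ci0.
by rewrite /ci in ci0 *; rewrite ci0 expr0n eq_sym oppr_eq0 oner_eq0.
Qed.

Definition cosq (q : C) : C := (q + q^-1) / 2%:R.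
Definition sinq (q : C) : C := (q - q^-1) / (2%:R * ci R).

Lemma ccosE (w : C) : ccos w = cosq (cexp (ci R * w)).
Proof. by rewrite /ccos /cosq cexpN. Qed.

Lemma csinE (w : C) : csin w = sinq (cexp (ci R * w)).
Proof. by rewrite /csin /sinq cexpN. Qed.

Lemma cosq2Dsinq2 (q : C) : q != 0 -> cosq q ^+ 2 + sinq q ^+ 2 = 1.
Proof.
move=> q0; rewrite /cosq /sinq !expr_div_n exprMn (sqr_i R).
by field; rewrite ?pnatr_eq0 //= ?mulf_neq0 ?expf_neq0 ?oppr_eq0 ?oner_eq0 ?pnatr_eq0.
Qed.

Lemma csinN (w : C) : csin (- w) = - csin w.
Proof. by rewrite /csin mulrN opprK -opprB mulNr. Qed.

Lemma ccosN (w : C) : ccos (- w) = ccos w.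
Proof. by rewrite /ccos mulrN opprK addrC. Qed.

Lemma csin0 : csin (0 : C) = 0.
Proof. by rewrite /csin mulr0 oppr0 cexp0 subrr mul0r. Qed.

Lemma ccos0 : ccos (0 : C) = 1.
Proof. by rewrite /ccos mulr0 oppr0 cexp0 -mulr2n -mulr_natr mulfV // mul1r pnatr_eq0. Qed.

Lemma sqrtC_sqr (z : C) : sqrtC (z ^+ 2) = z \/ sqrtC (z ^+ 2) = - z.
Proof.
have := eqxx (z ^+ 2); rewrite -{1}(sqrtCK (z ^+ 2)) eqf_sqr.
by case/orP => /eqP ->; [left | right].
Qed.

Variable ell : R.

Lemma s_fun_sqr (z : C) : z != 0 -> s_fun (z ^+ 2) ell = csin (z * ell%:C%C) / z.
Proof.
move=> z0; rewrite /s_fun sqrf_eq0 (negbTE z0).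
by case: (sqrtC_sqr z) => ->; rewrite // mulNr csinN invrN mulrNN.
Qed.

Lemma c_fun_sqr (z : C) : c_fun (z ^+ 2) ell = ccos (z * ell%:C%C).
Proof. by rewrite /c_fun; case: (sqrtC_sqr z) => ->; rewrite // mulNr ccosN. Qed.

Lemma s'_fun_sqr (z : C) : s'_fun (z ^+ 2) ell = ccos (z * ell%:C%C).
Proof. by rewrite /s'_fun; case: (sqrtC_sqr z) => ->; rewrite // mulNr ccosN. Qed.

Lemma c'_fun_sqr (z : C) : c'_fun (z ^+ 2) ell = - (z * csin (z * ell%:C%C)).
Proof.
by rewrite /c'_fun; case: (sqrtC_sqr z) => ->; rewrite // !(mulNr, mulrN, csinN, opprK).
Qed.

Lemma s'_fun_sqr0 (z : C) : s'_fun (z ^+ 2) 0 = 1.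
Proof. by rewrite /s'_fun mulr0 ccos0. Qed.

Lemma c'_fun_sqr0 (z : C) : c'_fun (z ^+ 2) 0 = 0.
Proof. by rewrite /c'_fun mulr0 csin0 mulr0 oppr0. Qed.
End ComplexTrig.

Section KirchhoffKernel.
Variables (R : realType) (p : nat) (src dst : 'I_p.-1 -> 'I_p) (jsel : 'I_p -> 'I_p.-1).
Hypothesis jsel_incident : forall i, src (jsel i) = i \/ dst (jsel i) = i.
Hypothesis src_neq_dst : forall k, src k != dst k.
Local Notation C := R[i].
Local Notation g := p.-1.
Variables (c s : C) (x : 'I_(g + g) -> C).
Hypothesis kernel : forall r, \sum_col kirchhoff_mx src dst jsel c s 1 r col * x col = 0.
Local Notation al k := (x (lshift g k)).
Local Notation be k := (x (rshift g k)).

Definition edge_value (i : 'I_p) (k : 'I_g) : C :=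
  (if src k == i then 0 else if dst k == i then s else 0) * al k +
  (if src k == i then 1 else if dst k == i then c else 0) * be k.

Definition vertex_value (i : 'I_p) : C := edge_value i (jsel i).

Lemma sum_value_coef i k :
  \sum_col value_coef src dst c s 1 i k col * x col = edge_value i k.
Proof.
rewrite big_split_ord /value_coef /=.
under eq_bigr do rewrite (unsplitK (inl _)).
under [X in _ + X]eq_bigr do rewrite (unsplitK (inr _)).
have pick (A : C) (F : 'I_g -> C) : \sum_k' (if k' == k then A else 0) * F k' = A * F k.
  by rewrite (bigD1 k) //= eqxx big1 ?addr0 // => k' /negbTE ->; rewrite mul0r.
by rewrite !pick.
Qed.

Lemma sum_flux_coef i :
  \sum_col flux_coef src dst c s 1 i col * x col =
  \sum_k ((if dst k == i then c * al k - s * be k else 0) -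
          (if src k == i then al k else 0)).
Proof.
rewrite big_split_ord /flux_coef /= -big_split /=; apply: eq_bigr => k _.
rewrite (unsplitK (inl _)) (unsplitK (inr _)).
by case: (dst k == i); case: (src k == i); ring.
Qed.

Lemma kernel_continuity r :
  let: (k, i) := incidence src dst r in edge_value i k = vertex_value i.
Proof.
have := kernel r; under eq_bigr do rewrite mxE.
case: (incidence src dst r) => k i.
have [-> // | _] := eqVneq k (jsel i).
under eq_bigr do rewrite mulrBl.
by rewrite sumrB !sum_value_coef => /eqP; rewrite subr_eq0 => /eqP <-.
Qed.

Lemma kernel_src_value k : be k = vertex_value (src k).
Proof.
have := kernel_continuity (lshift g k); rewrite /incidence (unsplitK (inl _)) => <-.
by rewrite /edge_value eqxx mul0r mul1r add0r.
Qed.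

Lemma kernel_dst_value k : s * al k + c * be k = vertex_value (dst k).
Proof.
have := kernel_continuity (rshift g k); rewrite /incidence (unsplitK (inr _)) => <-.
by rewrite /edge_value (negbTE (src_neq_dst k)) eqxx.
Qed.

Lemma kernel_flux i :
  \sum_k ((if dst k == i then c * al k - s * be k else 0) -
          (if src k == i then al k else 0)) = 0.
Proof.
have := kernel (principal_row src jsel i); under eq_bigr do rewrite mxE.
by rewrite incidence_principal_row // eqxx sum_flux_coef.
Qed.

(* Pairing the flux condition at each vertex with the conjugate vertex value. *)
Lemma kernel_energy :
  \sum_k ((vertex_value (dst k))^* * (c * al k - s * be k) -
          (vertex_value (src k))^* * al k) = 0.
Proof.
have pick (y : 'I_p -> C) (d : 'I_p) (A : C) :
    \sum_i y i * (if d == i then A else 0) = y d * A.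
  rewrite (bigD1 d) //= eqxx big1 ?addr0 // => i /negbTE.
  by rewrite eq_sym => ->; rewrite mulr0.
transitivity (\sum_i (vertex_value i)^* *
  \sum_k ((if dst k == i then c * al k - s * be k else 0) -
          (if src k == i then al k else 0))); last first.
  by apply: big1 => i _; rewrite kernel_flux mulr0.
under [RHS]eq_bigr do rewrite mulr_sumr.
rewrite exchange_big /=; apply: eq_bigr => k _.
by under eq_bigr do rewrite mulrBr; rewrite sumrB !pick.
Qed.

Hypotheses (c_gt1 : 1 < c) (cos2Dsin2 : c ^+ 2 + s ^+ 2 = 1).

Lemma kernel_vertex_value_eq0 k :
  vertex_value (dst k) = 0 /\ vertex_value (src k) = 0.
Proof.
pose W k := (c - 1) * (vertex_value (dst k) * (vertex_value (dst k))^* +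
                       vertex_value (src k) * (vertex_value (src k))^*) +
  (vertex_value (dst k) - vertex_value (src k)) *
  (vertex_value (dst k) - vertex_value (src k))^*.
have c1_gt0 : 0 < c - 1 by rewrite subr_gt0.
have norm2_ge0 k' : 0 <= vertex_value (dst k') * (vertex_value (dst k'))^* +
                         vertex_value (src k') * (vertex_value (src k'))^*.
  by rewrite addr_ge0 ?mul_conjC_ge0.
have W_ge0 k' : 0 <= W k'.
  exact: addr_ge0 (mulr_ge0 (ltW c1_gt0) (norm2_ge0 k')) (mul_conjC_ge0 _).
(* Eliminating [al] and [be] with the continuity equations, [s] times each
   edge term of the energy is [W]. *)
have sW k' : s * ((vertex_value (dst k'))^* * (c * al k' - s * be k') -
                  (vertex_value (src k'))^* * al k') = W k'.
  have sal : s * al k' = vertex_value (dst k') - c * vertex_value (src k').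
    by rewrite -kernel_dst_value -kernel_src_value; ring.
  have s2 : s ^+ 2 = 1 - c ^+ 2 by rewrite -cos2Dsin2; ring.
  transitivity ((vertex_value (dst k'))^* * (c * (s * al k') - s ^+ 2 * be k') -
                (vertex_value (src k'))^* * (s * al k')); first by ring.
  by rewrite sal s2 kernel_src_value /W rmorphB /=; ring.
have sumW : \sum_k' W k' = 0.
  by under eq_bigr do rewrite -sW; rewrite -mulr_sumr kernel_energy mulr0.
have /eqP := psumr_eq0P (fun k' _ => W_ge0 k') sumW (i := k) isT.
rewrite /W paddr_eq0 ?mul_conjC_ge0 //; last exact: mulr_ge0 (ltW c1_gt0) (norm2_ge0 k).
rewrite mulf_eq0 (negbTE (lt0r_neq0 c1_gt0)) paddr_eq0 ?mul_conjC_ge0 //.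
by rewrite !mul_conjC_eq0 => /andP[/andP[/eqP -> /eqP ->] _].
Qed.

Hypothesis s_neq0 : s != 0.

Lemma kernel_eq0 col : x col = 0.
Proof.
rewrite -(splitK col); case: (split col) => k /=; have [dst0 src0] := kernel_vertex_value_eq0 k.
  apply/eqP; rewrite -(mulrI_eq0 _ (mulfI s_neq0)); apply/eqP.
  have -> : s * al k = vertex_value (dst k) - c * be k by rewrite -kernel_dst_value; ring.
  by rewrite kernel_src_value src0 dst0 mulr0 subr0.
by rewrite kernel_src_value.
Qed.
End KirchhoffKernel.

Lemma det_kirchhoff_mx_neq0 (R : realType) (p : nat) (src dst : 'I_p.-1 -> 'I_p)
    (jsel : 'I_p -> 'I_p.-1) (c s : R[i]) :
  (forall i, src (jsel i) = i \/ dst (jsel i) = i) -> (forall k, src k != dst k) ->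
  1 < c -> c ^+ 2 + s ^+ 2 = 1 -> s != 0 ->
  \det (kirchhoff_mx src dst jsel c s 1) != 0.
Proof.
move=> jsel_incident src_neq_dst c_gt1 cs1 s_neq0.
rewrite -det_tr; apply/det0P => -[v v_neq0 v_ker].
suff kernel : forall r, \sum_col kirchhoff_mx src dst jsel c s 1 r col * v 0 col = 0.
  move/negP: v_neq0; apply; apply/eqP/rowP => j; rewrite mxE.
  exact: (kernel_eq0 jsel_incident src_neq_dst kernel c_gt1 cs1 s_neq0).
move=> r; move/rowP: v_ker => /(_ r) v_ker_r; rewrite !mxE in v_ker_r.
rewrite -[RHS]v_ker_r.
by apply: eq_bigr => j _; rewrite !mxE mulrC.
Qed.

Section RegularPhase.
Variables (R : realType) (p : nat) (src dst : 'I_p.-1 -> 'I_p) (jsel : 'I_p -> 'I_p.-1).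
Hypothesis jsel_incident : forall i, src (jsel i) = i \/ dst (jsel i) = i.
Hypothesis src_neq_dst : forall k, src k != dst k.
Local Notation C := R[i].
Local Notation g := p.-1.

Definition kirchhoff_poly : {poly C} :=
  \det (kirchhoff_mx src dst jsel (('X ^+ 2 + 1) * (2%:R^-1)%:P)
                                  (('X ^+ 2 - 1) * ((2%:R * ci R)^-1)%:P) 'X).

Lemma horner_kirchhoff_poly (q : C) : q != 0 ->
  kirchhoff_poly.[q] = q ^+ (g + g) * \det (kirchhoff_mx src dst jsel (cosq q) (sinq q) 1).
Proof.
move=> q0; rewrite /kirchhoff_poly -horner_evalE -det_map_mx map_kirchhoff_mx /=.
rewrite !horner_evalE -detZ -kirchhoff_mxZ mulr1 hornerX.
have -> : (('X ^+ 2 + 1) * (2%:R^-1)%:P).[q] = q * cosq q by rewrite /cosq !hornerE /=; field.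
have -> // : (('X ^+ 2 - 1) * ((2%:R * ci R)^-1)%:P).[q] = q * sinq q.
by rewrite /sinq !hornerE /=; field; rewrite ci_neq0 q0.
Qed.

Lemma kirchhoff_poly_neq0 : kirchhoff_poly != 0.
Proof.
have half_neq0 : (2%:R^-1 : C) != 0 by rewrite invr_eq0 pnatr_eq0.
apply/eqP => P0; have := horner_kirchhoff_poly half_neq0.
rewrite P0 horner0 => /esym/eqP; rewrite mulf_eq0 expf_eq0 (negbTE half_neq0) andbF /=.
apply/negP/det_kirchhoff_mx_neq0 => //.
- rewrite -subr_gt0.
  have -> : cosq 2%:R^-1 - 1 = 4%:R^-1 :> C by rewrite /cosq invrK; field.
  by rewrite invr_gt0 ltr0n.
- exact: cosq2Dsinq2.
- rewrite /sinq invrK mulf_neq0 ?invr_eq0 ?mulf_neq0 ?ci_neq0 ?pnatr_eq0 //.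
  have -> : (2%:R^-1 - 2%:R : C) = - (3%:R / 2%:R) by field.
  by rewrite oppr_eq0 mulf_neq0 ?invr_eq0 ?pnatr_eq0.
Qed.

(* The points [q = exp (i (u + i eta))] with [u = pi j / n], [j < n], are [n]
   distinct points, and [kirchhoff_poly] has fewer than [n] roots. *)
Lemma exists_regular_phase (eta : R) : exists u : R,
  \det (kirchhoff_mx src dst jsel (ccos (Complex u eta)) (csin (Complex u eta)) 1) != 0.
Proof.
pose n := size kirchhoff_poly.
pose qs := [seq cexp (ci R * Complex (pi * j%:R / n%:R) eta) | j <- iota 0 n].
have qs_uniq : uniq qs.
  rewrite map_inj_in_uniq ?iota_uniq // => j k; rewrite !mem_iota !add0n => jn kn.
  move=> /(congr1 (@re_part R)); rewrite /= !(mul0r, mul1r, sub0r, add0r).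
  move=> /(mulfI (lt0r_neq0 (expR_gt0 _))).
  have phase_in m : (m < n)%N -> (pi : R) * m%:R / n%:R \in `[0, pi].
    move=> mn; rewrite in_itv /= divr_ge0 ?mulr_ge0 ?pi_ge0 ?ler0n //=.
    by rewrite ler_pdivrMr ?ltr0n ?(leq_ltn_trans _ mn) // ler_pM2l ?pi_gt0 // ler_nat ltnW.
  move/(cos_inj (phase_in _ jn) (phase_in _ kn))/(mulIf _).
  have /[swap]/[apply] : n%:R^-1 != 0 :> R.
    by rewrite invr_eq0 pnatr_eq0 -lt0n (leq_ltn_trans _ jn).
  by move/(mulfI (lt0r_neq0 (@pi_gt0 R)))/eqP; rewrite eqr_nat => /eqP.
have : ~~ all (root kirchhoff_poly) qs.
  apply: contraT; rewrite negbK => all_roots.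
  have := max_poly_roots kirchhoff_poly_neq0 all_roots qs_uniq.
  by rewrite size_map size_iota ltnn.
case/allPn => _ /mapP [j _ ->]; rewrite /root horner_kirchhoff_poly ?cexp_neq0 //.
by rewrite mulf_eq0 negb_or => /andP[_]; exists (pi * j%:R / n%:R); rewrite ccosE csinE.
Qed.
End RegularPhase.

Section ComplexNorm.
Variable R : rcfType.
Local Notation C := R[i].

Lemma normc_ge0 (z : C) : 0 <= normc z.
Proof. exact: (@normr_ge0 _ (Rcomplex R)). Qed.

Lemma normcX (z : C) n : normc (z ^+ n) = normc z ^+ n.
Proof. by elim: n => [|n IHn]; rewrite ?expr0 ?normc1 // !exprS normcM IHn. Qed.

Lemma normc_sum n (F : 'I_n -> C) : normc (\sum_(i < n) F i) <= \sum_(i < n) normc (F i).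
Proof. exact: (@ler_norm_sum _ (Rcomplex R)). Qed.

Lemma normcB (x y : C) : normc x - normc y <= normc (x - y).
Proof. exact: (@lerB_dist _ (Rcomplex R)). Qed.

Lemma normc_ge_re (x y : R) : x <= normc (Complex x y).
Proof.
rewrite /normc; apply: le_trans (ler_norm x) _.
by rewrite -sqrtr_sqr ler_sqrt ?addr_ge0 ?sqr_ge0 // lerDl sqr_ge0.
Qed.

Lemma normc_horner_sub0 (P : {poly C}) (t : C) : normc t <= 1 ->
  normc (P.[t] - P.[0]) <= normc t * \sum_(i < size P) normc P`_i.
Proof.
move=> t_le1; rewrite horner_coef0 horner_coef.
case sizeP: (size P) => [|n].
  by rewrite !big_ord0 nth_default ?sizeP // subrr normc0 mulr0.
rewrite !big_ord_recl /= expr0 mulr1 addrC addKr mulrDr.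
apply: le_trans (normc_sum _) _.
apply: le_trans (_ : \sum_(i < n) normc t * normc P`_(bump 0 i) <= _); last first.
  by rewrite -mulr_sumr lerDr mulr_ge0 ?normc_ge0.
apply: ler_sum => i _; rewrite normcM normcX mulrC ler_wpM2r ?normc_ge0 //.
by rewrite exprS ler_piMr ?normc_ge0 // exprn_ile1 ?normc_ge0.
Qed.

Lemma poly_bounded_below_near0 (P : {poly C}) : P.[0] != 0 ->
  exists2 a : R, 0 < a &
    exists2 d : R, 0 < d & forall t : C, normc t <= d -> a <= normc P.[t].
Proof.
move=> P0_neq0; set A := normc P.[0]; set K := \sum_(i < size P) normc P`_i.
have A_gt0 : 0 < A by rewrite lt_def normc_ge0 andbT; apply: contra P0_neq0 => /eqP/eq0_normc ->.
have K_ge0 : 0 <= K by rewrite sumr_ge0 // => i _; apply: normc_ge0.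
exists (A / 2); first by rewrite divr_gt0.
exists (A / (2 * (K + A))); first by rewrite divr_gt0 // mulr_gt0 // ltr_pwDr.
move=> t t_le; have KA_gt0 : 0 < K + A by rewrite ltr_pwDr.
have d_le1 : A / (2 * (K + A)) <= 1 by rewrite ler_pdivrMr ?mulr_gt0 // mul1r; lra.
have dK_le : A / (2 * (K + A)) * K <= A / 2.
  rewrite mulrAC ler_pdivrMr ?mulr_gt0 // mulrAC ler_pdivlMr // -mulrA ler_pM2l //; nra.
have tK_le : normc t * K <= A / (2 * (K + A)) * K by rewrite ler_wpM2r.
have := normc_horner_sub0 P (le_trans t_le d_le1); rewrite -/K.
have := normcB P.[0] (P.[0] - P.[t]); rewrite subKr -[P.[0] - _]opprB normcN -/A.
move: dK_le tK_le; set d := A / (2 * (K + A)) * K; lra.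
Qed.
End ComplexNorm.

Section Rescaling.
Variables (R : realType) (p : nat) (ell : R) (src dst : 'I_p.-1 -> 'I_p)
          (jsel : 'I_p -> 'I_p.-1) (b : 'I_p -> R).
Local Notation C := R[i].
Local Notation g := p.-1.

Definition robin_mx (c s : C) : 'M[C]_(g + g) :=
  \matrix_(r, col) let: (k, i) := incidence src dst r in
    if k == jsel i then (b i)%:C%C * value_coef src dst c s 1 i (jsel i) col else 0.

Definition principal (r : 'I_(g + g)) : bool :=
  let: (k, i) := incidence src dst r in k == jsel i.

Local Notation K z := (kirchhoff_mx src dst jsel (ccos (z * ell%:C%C)) (csin (z * ell%:C%C)) 1).
Local Notation B z := (robin_mx (ccos (z * ell%:C%C)) (csin (z * ell%:C%C))).

Lemma charmat_rescaled (z : C) : z != 0 ->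
  diag_mx (\row_r (if principal r then z^-1 else 1)) *m charmat ell src dst jsel b (z ^+ 2)
    *m diag_mx (\row_col (if split col is inl _ then z else 1))
  = K z + z^-1 *: B z.
Proof.
move=> z0; rewrite mul_diag_mx mul_mx_diag; apply/matrixP => r col; rewrite !mxE.
rewrite /principal /coef_princ /coef_val /value_coef /flux_coef /incidence.
rewrite (s_fun_sqr _ z0) c_fun_sqr s'_fun_sqr s'_fun_sqr0 c'_fun_sqr c'_fun_sqr0.
case: (split r) => k /=; case: (split col) => k' /=;
  repeat case: ifP => _; rewrite ?mulr0 ?mul0r ?addr0 ?add0r //; by field.
Qed.

Lemma det_charmat_rescaled (z : C) : z != 0 ->
  z^-1 ^+ #|principal| * \det (charmat ell src dst jsel b (z ^+ 2)) * z ^+ g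
  = \det (K z + z^-1 *: B z).
Proof.
move=> z0; rewrite -charmat_rescaled // !det_mulmx !det_diag.
congr (_ * _ * _); first by under eq_bigr do rewrite mxE; rewrite -big_mkcond prodr_const.
rewrite big_split_ord /=.
under eq_bigr do rewrite mxE (unsplitK (inl _)).
under [X in _ * X]eq_bigr do rewrite mxE (unsplitK (inr _)).
by rewrite prodr_const card_ord big1 ?mulr1.
Qed.

Hypothesis jsel_incident : forall i, src (jsel i) = i \/ dst (jsel i) = i.

Lemma card_principal : (p <= #|principal|)%N.
Proof.
rewrite -{1}(card_ord p) -(card_imset _ (principal_row_inj jsel_incident)).
apply/subset_leq_card/subsetP => _ /imsetP [i _ ->].
by rewrite unfold_in /principal incidence_principal_row // eqxx.
Qed.

(* More principal rows than alpha-columns: [phi (z^2)] gains a factor [z]. *)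
Lemma normc_phi_ge (z : C) : (0 < p)%N -> 1 <= normc z ->
  normc z * normc (\det (K z + z^-1 *: B z)) <= normc (phi ell src dst jsel b (z ^+ 2)).
Proof.
move=> p_gt0 z_ge1; have z_gt0 : 0 < normc z by apply: lt_le_trans z_ge1.
have z0 : z != 0 by apply: contraTneq z_gt0 => ->; rewrite normc0 ltxx.
rewrite -det_charmat_rescaled // !normcM !normcX normcV.
set m := normc z; set F := normc _; set P := #|principal|.
have -> : m * (m^-1 ^+ P * F * m ^+ g) = F * (m ^+ g.+1 / m ^+ P).
  by rewrite exprVn exprS; field; rewrite expf_neq0 // lt0r_neq0.
rewrite ler_piMr ?normc_ge0 // ler_pdivrMr ?exprn_gt0 // mul1r ler_weXn2l //.
by rewrite prednK // card_principal.
Qed.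
End Rescaling.

Lemma horner_det_pencil (T : comNzRingType) n (N B : 'M[T]_n) (t : T) :
  (\det (map_mx polyC N + 'X *: map_mx polyC B)).[t] = \det (N + t *: B).
Proof.
rewrite -horner_evalE -det_map_mx; congr (\det _); apply/matrixP => i j.
by rewrite !mxE /= horner_evalE hornerD hornerC mulrC hornerMX hornerC mulrC.
Qed.

Lemma exists_large_period_shift (R : realType) (ell u eta B : R) : 0 < ell ->
  exists2 x : R, B <= x &
    cexp (ci R * (Complex x eta * ell%:C%C)) = cexp (ci R * Complex u (eta * ell)).
Proof.
move=> ell_gt0; pose n := Num.Def.archi_bound `|B * ell - u|.
exists ((u + pi *+ 2 *+ n) / ell).
  have n_gt : B * ell - u < n%:R.
    exact: le_lt_trans (ler_norm _) (archi_boundP (normr_ge0 _)).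
  have n_le : n%:R <= pi *+ 2 *+ n :> R.
    by rewrite -mulr_natr mulr2n; have := @pi_ge2 R; have := ler0n R n; nra.
  by rewrite ler_pdivlMr //; lra.
rewrite /cexp /= !(mul0r, mulr0, mul1r, add0r, sub0r, subr0, addr0) divfK ?lt0r_neq0 //.
by rewrite (periodicn (@cosD2pi R)) (periodicn (@sinD2pi R)).
Qed.

Lemma phi_unbounded_on_line (R : realType) (p : nat) (ell : R)
    (src dst : 'I_p.-1 -> 'I_p) (jsel : 'I_p -> 'I_p.-1) (b : 'I_p -> R) (r : nat) :
  (0 < p)%N -> 0 < ell -> (forall k, src k != dst k) ->
  (forall i, src (jsel i) = i \/ dst (jsel i) = i) ->
  forall h M : R, exists x : R,
    M < normc (Complex x h ^+ r * phi ell src dst jsel b (Complex x h ^+ 2)).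
Proof.
move=> p_gt0 ell_gt0 src_neq_dst jsel_incident h M.
have [u det_neq0] := exists_regular_phase jsel_incident src_neq_dst (h * ell).
set w := Complex u (h * ell) in det_neq0.
pose B0 := robin_mx src dst jsel b (ccos w) (csin w).
pose D := \det (map_mx polyC (kirchhoff_mx src dst jsel (ccos w) (csin w) 1)
                + 'X *: map_mx polyC B0).
have [a a_gt0 [d d_gt0 D_ge]] : exists2 a : R, 0 < a &
    exists2 d : R, 0 < d & forall t, normc t <= d -> a <= normc D.[t].
  apply: poly_bounded_below_near0; rewrite /D horner_det_pencil scale0r addr0.
  exact: det_neq0.
have [x x_ge shift] := exists_large_period_shift u h (1 + d^-1 + `|M| / a) ell_gt0.
exists x; set z := Complex x h.
have z_ge : 1 + d^-1 + `|M| / a <= normc z := le_trans x_ge (normc_ge_re x h).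
have Mda_ge0 : 0 <= `|M| / a := divr_ge0 (normr_ge0 M) (ltW a_gt0).
have dinv_gt0 : 0 < d^-1 by rewrite invr_gt0.
have invz_le : normc z^-1 <= d by rewrite normcV -[d]invrK lef_pV2 ?posrE; lra.
have := normc_phi_ge ell b jsel_incident (z := z) p_gt0; rewrite ccosE csinE.
rewrite shift -ccosE -csinE -/w -/B0 -horner_det_pencil.
have := D_ge _ invz_le; set Dz := normc _; set F := normc (phi _ _ _ _ _ _).
move=> Dz_ge /(_ ltac:(lra)) F_ge; rewrite normcM normcX -/F.
have az_le : a * normc z <= F.
  by apply: le_trans F_ge; rewrite mulrC ler_wpM2l ?normc_ge0.
have M_lt : `|M| < a * normc z.
  rewrite -ltr_pdivrMl // mulrC; apply: lt_le_trans z_ge.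
  by rewrite -ltrBlDr; lra.
have F_le : F <= normc z ^+ r * F.
  by rewrite ler_peMl ?normc_ge0 // exprn_ege1 //; lra.
have := ler_norm M; lra.
Qed.

Theorem lemma4p5 (R : realType) (p : nat) (ell : R)
    (src dst : 'I_p.-1 -> 'I_p) (jsel : 'I_p -> 'I_p.-1) (b : 'I_p -> R) :
  (2 <= p)%N -> 0 < ell -> is_tree src dst ->
  (forall i, src (jsel i) = i \/ dst (jsel i) = i) ->
  forall r : nat, (1 <= r <= p)%N ->
    ~ sine_type (fun z : R[i] => z ^+ r.-1 * phi ell src dst jsel b (z ^+ 2)).
Proof.
move=> p_ge2 ell_gt0 [src_neq_dst _] jsel_incident r _.
move=> [_ [_ [_ [[h [M1 [M2 [_ [_ bounded_on_line]]]]] _]]]].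
have [x unbounded] := phi_unbounded_on_line b r.-1 (ltnW p_ge2) ell_gt0
  src_neq_dst jsel_incident h M2.
by have /andP[_] := bounded_on_line x; rewrite leNgt unbounded.
Qed.
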